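(* Let $\mathcal{X},\mathcal{Y}$ be finite sets with $|\mathcal{X}|,|\mathcal{Y}|\ge2$, $\mathcal{A}=\{0,1\}$, $x^*\in\mathcal{X}$ fixed, and $\epsilon_A\in[0,1)$. The set $\mathcal{P}_2^{x^*,A,\epsilon_A}$ is a convex polytope, and for every vertex $p^{ext}$ of it one has $p^{ext}(a|x^*y)\in\{0,\epsilon_A,1-\epsilon_A,1\}$ for all $a\in\mathcal{A}$, $y\in\mathcal{Y}$.
   Context: For finite sets $\mathcal{Y},\mathcal{A}$, a fixed input $x^*$ and $\epsilon_A\in[0,1]$, $\mathcal{P}_2^{x^*,A,\epsilon_A}$ is the set of all vectors $(p(a|x^*y))_{a\in\mathcal{A},y\in\mathcal{Y}}$ for which there exist a probability space $(\Lambda,q)$ and measurable families of probability distributions $p_A(\cdot|x^*,y,\lambda)$ on $\mathcal{A}$ such that $p(a|x^*y)=\int q(d\lambda)\,p_A(a|x^*y\lambda)$ for all $a,y$ and $\frac12\sum_a|p_A(a|x^*y\lambda)-p_A(a|x^*y'\lambda)|\le\epsilon_A$ for all $y,y',\lambda$. *)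

From HB Require Import structures.
From mathcomp Require Import all_boot all_order all_algebra.
From mathcomp Require Import all_classical all_reals all_analysis.
Set Implicit Arguments. Unset Strict Implicit. Unset Printing Implicit Defensive.
Import Order.TTheory GRing.Theory Num.Theory.
Local Open Scope ring_scope.

(* A vector (p(a|x* y))_{a,y} is represented as a function  Y -> A -> R,
   p y a = p(a|x* y).  The fixed input x* only labels the vectors. *)

Definition tvdist (R : realType) (A : finType) (u v : A -> R) : R :=
  2^-1 * \sum_(a : A) `|u a - v a|.

Definition P2 (R : realType) (X Y A : finType) (xs : X) (eps : R)
    (p : Y -> A -> R) : Prop :=
  exists (d : measure_display) (L : measurableType d) (q : probability L R)
         (pA : L -> Y -> A -> R),
    [/\ (forall y a, measurable_fun setT (fun l => pA l y a)),
        (forall l y a, 0 <= pA l y a),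
        (forall l y, \sum_(a : A) pA l y a = 1),
        (forall y a, ((p y a)%:E = \int[q]_(l in setT) (pA l y a)%:E)%E) &
        (forall l y y', tvdist (pA l y) (pA l y') <= eps)].

Definition is_convex_set (R : realType) (Y A : Type) (P : (Y -> A -> R) -> Prop)
  : Prop :=
  forall u v t, P u -> P v -> 0 <= t <= 1 ->
    P (fun y a => t * u y a + (1 - t) * v y a).

Definition is_polytope (R : realType) (Y A : Type) (P : (Y -> A -> R) -> Prop)
  : Prop :=
  exists (n : nat) (s : 'I_n -> Y -> A -> R),
    forall p, P p <->
      exists w : 'I_n -> R,
        [/\ (forall i, 0 <= w i), \sum_(i < n) w i = 1 &
            forall y a, p y a = \sum_(i < n) w i * s i y a].

Definition is_vertex (R : realType) (Y A : Type) (P : (Y -> A -> R) -> Prop)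
  (p : Y -> A -> R) : Prop :=
  P p /\
  forall u v t, P u -> P v -> 0 < t < 1 ->
    p = (fun y a => t * u y a + (1 - t) * v y a) -> u = p /\ v = p.

From HB Require Import structures.
From mathcomp Require Import all_boot all_order all_algebra.
From mathcomp Require Import all_classical all_reals all_analysis.
From mathcomp Require Import ring lra measurable_realfun.
Import Order.TTheory GRing.Theory Num.Theory.
Set Implicit Arguments. Unset Strict Implicit.
Local Open Scope ring_scope.

(* With two outcomes a distribution is determined by its weight r on [0], and
   the total-variation distance becomes [|r - r'|].  Averaging over the hidden
   variable shows that P_2 consists exactly of the [r : Y -> [0, 1]] with
   [r y <= r y' + eps]; a deterministic hidden variable realises each of them.
   Such an [r] lies in a window [[c, c + eps]] with [0 <= c <= 1 - eps]; writing
   [r y = c + eps * d y] with [d y] in [[0, 1]] and [c] as a convex combination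
   of [0] and [1 - eps], independent Bernoulli([d y]) weights express [r] as a
   convex combination of the finitely many corners
   [(if b then 1 - eps else 0) + eps * v y] with [b : bool], [v : Y -> bool].
   Hence P_2 is the convex hull of these corners, and every vertex of a finite
   convex hull is one of its generators. *)

Lemma sum_ord2 (V : nmodType) (f : 'I_2 -> V) : \sum_i f i = f ord0 + f ord_max.
Proof. by rewrite big_ord_recr big_ord1; congr (f _ + _); apply: val_inj. Qed.

Lemma ord2_cases (a : 'I_2) : a = ord0 \/ a = ord_max.
Proof. by case: a => [[|[|]]] // ?; [left|right]; apply: val_inj. Qed.

Section ConvexHull.

Variables (R : realType) (Y A : Type) (I : finType) (s : I -> Y -> A -> R).

Definition conv_hull (p : Y -> A -> R) : Prop :=
  exists w : I -> R, [/\ forall i, 0 <= w i, \sum_i w i = 1 &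
                         forall y a, p y a = \sum_i w i * s i y a].

Lemma conv_hull_generator i : conv_hull (s i).
Proof.
exists (fun j => (j == i)%:R); split.
- by move=> j; rewrite ler0n.
- by rewrite (bigD1 i) //= eqxx big1 ?addr0 // => j /negbTE ->.
- move=> y a; rewrite (bigD1 i) //= eqxx mul1r big1 ?addr0 //.
  by move=> j /negbTE ->; rewrite mul0r.
Qed.

(* A point with a positive weight [w i] splits off half of the generator [s i]. *)
Lemma vertex_conv_hull (P : (Y -> A -> R) -> Prop) p :
  (forall q, P q <-> conv_hull q) -> is_vertex P p -> exists i, p = s i.
Proof.
move=> PE [Pp vertex_p]; have [w [w0 w1 pw]] := (PE p).1 Pp.
have [i wi_gt0] : exists i, 0 < w i.
  apply/existsP; apply: contraTT isT => /existsPn w_le0.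
  have : \sum_i w i <= 0 by apply: sumr_le0 => i _; rewrite leNgt w_le0.
  by rewrite w1 ler10.
have wi_le1 : w i <= 1.
  by rewrite -w1 (bigD1 i) //= lerDl; apply: sumr_ge0 => j _.
pose t := w i / 2.
have t01 : 0 < t < 1 by apply/andP; split; rewrite /t; lra.
have t1 : 1 - t != 0 by rewrite subr_eq0 eq_sym lt_eqF //; case/andP: t01.
pose w' j := (w j - t * (j == i)%:R) / (1 - t).
pose q y a := \sum_j w' j * s j y a.
have Pq : P q.
  apply/PE; exists w'; split => //.
  - move=> j; rewrite /w'; apply: divr_ge0; last by case/andP: t01 => _; lra.
    by case: eqP => [->|_]; rewrite ?mulr1 ?mulr0 ?subr0 //; rewrite /t; lra.
  - rewrite /w' -mulr_suml sumrB w1 (bigD1 i) //= eqxx mulr1 big1 ?addr0.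
      by rewrite divff.
    by move=> j /negbTE ->; rewrite mulr0.
have pE : p = (fun y a => t * s i y a + (1 - t) * q y a).
  apply/funext => y; apply/funext => a; rewrite pw /q mulr_sumr.
  have -> : \sum_j (1 - t) * (w' j * s j y a) =
            \sum_j (w j * s j y a - t * (j == i)%:R * s j y a).
    by apply: eq_bigr => j _; rewrite /w'; field.
  rewrite sumrB (bigD1 i) //= [X in _ - X](bigD1 i) //= eqxx mulr1.
  rewrite [X in _ - (_ + X)]big1 ?addr0; first ring.
  by move=> j /negbTE ->; rewrite mulr0 mul0r.
have [<- _] := vertex_p _ _ _ ((PE _).2 (conv_hull_generator i)) Pq t01 pE.
by exists i.
Qed.

Lemma conv_hull_enum p :
  conv_hull p <->
  exists w : 'I_#|I| -> R,
    [/\ forall i, 0 <= w i, \sum_(i < #|I|) w i = 1 &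
        forall y a, p y a = \sum_(i < #|I|) w i * s (enum_val i) y a].
Proof.
split=> -[w [w0 w1 pw]].
- exists (fun i => w (enum_val i)); split => //.
  + by rewrite -(big_enum_val (A := {: I}) w).
  + by move=> y a; rewrite pw (big_enum_val (A := {: I}) (fun i => w i * s i y a)).
- exists (fun x => w (enum_rank x)); split => //.
  + rewrite (big_enum_val (A := {: I}) (fun x => w (enum_rank x))) -w1.
    by apply: eq_bigr => i _; rewrite enum_valK.
  + move=> y a; rewrite pw (big_enum_val (A := {: I}) (fun x => w (enum_rank x) * s x y a)).
    by apply: eq_bigr => i _; rewrite enum_valK.
Qed.

End ConvexHull.

Section BernoulliWeight.

Variables (R : realType) (Y : finType) (d : Y -> R).

Definition bernoulli_weight (v : {ffun Y -> bool}) : R :=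
  \prod_y (if v y then d y else 1 - d y).

Lemma sum_bernoulli_weight : \sum_v bernoulli_weight v = 1.
Proof.
rewrite /bernoulli_weight -(bigA_distr_bigA (fun y b => if b then d y else 1 - d y)).
by apply: big1 => y _; rewrite big_bool /= addrC subrK.
Qed.

Lemma bernoulli_weight_ge0 v : (forall y, 0 <= d y <= 1) -> 0 <= bernoulli_weight v.
Proof. by move=> d01; apply: prodr_ge0 => y _; have := d01 y; case: (v y); lra. Qed.

Lemma bernoulli_weight_marginal z : \sum_v bernoulli_weight v * (v z)%:R = d z.
Proof.
(* Folding [v z] into the [z]-th factor keeps the summand a product of
   coordinatewise terms, so the sum still distributes over the product. *)
pose G y b := (if b then d y else 1 - d y) * (if y == z then b%:R else 1).
have GE v : bernoulli_weight v * (v z)%:R = \prod_y G y (v y).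
  rewrite /G big_split /=; congr (_ * _).
  by rewrite (bigD1 z) //= eqxx big1 ?mulr1 // => y /negbTE ->.
rewrite (eq_bigr _ (fun v _ => GE v)) -(bigA_distr_bigA G).
rewrite (bigD1 z) //= [X in _ * X]big1 ?mulr1.
  by rewrite big_bool /G /= eqxx mulr1 mulr0 addr0.
by move=> y /negbTE yz; rewrite big_bool /G /= yz !mulr1 addrC subrK.
Qed.

End BernoulliWeight.

Section BinaryBehaviours.

Variables (R : realType) (Y : finType) (eps : R).

Definition binary (r : R) : 'I_2 -> R := fun a => if a == ord0 then r else 1 - r.

Definition eps_band (p : Y -> 'I_2 -> R) : Prop :=
  [/\ forall y a, 0 <= p y a, forall y, p y ord0 + p y ord_max = 1 &
      forall y y', p y ord0 <= p y' ord0 + eps].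

Lemma tvdist_binary (f g : 'I_2 -> R) :
  f ord0 + f ord_max = 1 -> g ord0 + g ord_max = 1 ->
  tvdist f g = `|f ord0 - g ord0|.
Proof.
move=> f1 g1; rewrite /tvdist sum_ord2.
have -> : f ord_max - g ord_max = - (f ord0 - g ord0) by lra.
by rewrite normrN; field.
Qed.

Lemma binary_band p y : eps_band p -> p y = binary (p y ord0).
Proof.
case=> _ p1 _; apply/funext => a.
by case: (ord2_cases a) => ->; rewrite /binary //=; have := p1 y; lra.
Qed.

Lemma sum_binary (J : finType) (w : J -> R) (f : J -> R) a :
  \sum_j w j = 1 -> \sum_j w j * binary (f j) a = binary (\sum_j w j * f j) a.
Proof.
rewrite /binary; case: (a == ord0) => // w1.
by rewrite -{2}w1 -sumrB; apply: eq_bigr => j _; rewrite mulrBr mulr1.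
Qed.

Lemma P2_band (X : finType) (xs : X) p : 0 <= eps -> P2 xs eps p -> eps_band p.
Proof.
move=> eps0 [d [L [q [pA [mA pA0 pA1 pE pTV]]]]].
have pA01 l y : pA l y ord0 + pA l y ord_max = 1 by rewrite -sum_ord2.
have mpA y a : measurable_fun setT (EFin \o (fun l => pA l y a)) by exact/measurable_EFinP.
split.
- move=> y a; rewrite -lee_fin pE; apply: integral_ge0 => l _.
  by rewrite lee_fin.
- move=> y; apply/EFin_inj; rewrite EFinD !pE.
  rewrite -ge0_integralD //; [|by move=> l _; rewrite lee_fin|exact: mpA
                              |by move=> l _; rewrite lee_fin|exact: mpA].
  rewrite (eq_integral (cst 1%:E)); last by move=> l _; rewrite -EFinD pA01.
  by rewrite integral_cst // mul1e; exact: probability_setT.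
- move=> y y'; rewrite -lee_fin EFinD !pE.
  rewrite -[X in (_ + X)%E]mule1 -(probability_setT q) -integral_cst //.
  rewrite -ge0_integralD //; [|by move=> l _; rewrite lee_fin|exact: mpA].
  apply: ge0_le_integral => //.
  + by move=> l _; rewrite lee_fin.
  + exact: mpA.
  + by apply/measurable_EFinP; apply: measurable_funD => //; exact: measurable_cst.
  move=> l _; rewrite lee_fin -lerBlDl.
  by apply: le_trans (pTV l y y'); rewrite tvdist_binary // ler_norm.
Qed.

Lemma band_P2 (X : finType) (xs : X) p : eps_band p -> P2 xs eps p.
Proof.
case=> p0 p1 pclose.
exists _, R, (@dirac _ R 0 R), (fun _ => p); split => //.
- by move=> _ y; rewrite sum_ord2.
- move=> y a; rewrite integral_cst // -[LHS]mule1; congr (_ * _)%E.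
  exact/esym/diracT.
- move=> _ y y'; rewrite tvdist_binary // ler_norml.
  by have := pclose y y'; have := pclose y' y; lra.
Qed.

Lemma band_convex : is_convex_set eps_band.
Proof.
move=> u v t [u0 u1 uclose] [v0 v1 vclose] /andP [t0 t1]; split.
- by move=> y a; apply: addr_ge0; apply: mulr_ge0 => //; lra.
- by move=> y; rewrite addrACA -!mulrDr u1 v1; ring.
- move=> y y'; have := uclose y y'; have := vclose y y'.
  have := u0 y ord0; have := v0 y ord0; nra.
Qed.

Lemma conv_hull_band (J : finType) (s : J -> Y -> 'I_2 -> R) p :
  (forall j, eps_band (s j)) -> conv_hull s p -> eps_band p.
Proof.
move=> s_band [w [w0 w1 pw]]; split.
- move=> y a; rewrite pw; apply: sumr_ge0 => j _; apply: mulr_ge0 => //.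
  by case: (s_band j) => ->.
- move=> y; rewrite !pw -big_split -w1 /=; apply: eq_bigr => j _.
  by case: (s_band j) => _ s1 _; rewrite -mulrDr s1 mulr1.
- move=> y y'; rewrite !pw -[X in _ <= _ + X]mul1r -w1 mulr_suml -big_split.
  apply: ler_sum => j _ /=; rewrite -mulrDr; apply: ler_wpM2l => //.
  by case: (s_band j) => _ _ ->.
Qed.

(* [c] is the smaller of [min_y p y ord0] and [1 - eps]. *)
Lemma band_window p :
  0 <= eps -> eps <= 1 -> eps_band p -> exists2 c, 0 <= c <= 1 - eps &
    forall y, c <= p y ord0 <= c + eps.
Proof.
move=> eps0 eps1 [p0 p1 pclose].
have r01 y : 0 <= p y ord0 <= 1.
  by have := p1 y; have := p0 y ord0; have := p0 y ord_max; lra.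
pose m := \big[Num.min/1]_y p y ord0.
have m_le y : m <= p y ord0 by rewrite /m (bigD1 y) //= ge_min lexx.
have m_ge0 : 0 <= m.
  by apply: (big_ind (fun x => 0 <= x)) => // x x' x0 x'0; rewrite le_min x0.
have m_ge y : p y ord0 - eps <= m.
  apply: (big_ind (fun x => p y ord0 - eps <= x)) => [|x x' lex lex'|z _].
  - by have := r01 y; lra.
  - by rewrite le_min lex.
  - by have := pclose y z; lra.
exists (Num.min m (1 - eps)).
  by rewrite le_min ge_min lexx orbT andbT m_ge0 subr_ge0.
move=> y; rewrite ge_min m_le /=.
by case: (leP m (1 - eps)) => _; [have := m_ge y|have := r01 y]; lra.
Qed.

Definition corner (bv : bool * {ffun Y -> bool}) (y : Y) : 'I_2 -> R :=
  binary ((if bv.1 then 1 - eps else 0) + eps * (bv.2 y)%:R).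

Lemma corner_entries bv y a :
  let x := corner bv y a in x = 0 \/ x = eps \/ x = 1 - eps \/ x = 1.
Proof.
case: bv => [b v]; rewrite /corner /binary /=.
case: (a == ord0); case: b; case: (v y) => /=;
  first [by left; ring | by right; left; ring | by right; right; left; ring
        | by right; right; right; ring].
Qed.

Lemma corner_band bv : 0 <= eps -> eps < 1 -> eps_band (corner bv).
Proof.
move=> eps0 eps1; case: bv => [b v]; rewrite /corner /binary /=; split => /=.
- by move=> y a; case: (a == ord0); case: b; case: (v y) => /=; lra.
- by move=> y; ring.
- by move=> y y'; case: b; case: (v y); case: (v y') => /=; lra.
Qed.

(* [c] is the mixture [tau * (1 - eps) + (1 - tau) * 0] of the two base levels. *)
Lemma conv_hull_corners c (d : Y -> R) :
  eps < 1 -> 0 <= c <= 1 - eps -> (forall y, 0 <= d y <= 1) ->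
  conv_hull corner (fun y => binary (c + eps * d y)).
Proof.
move=> eps1 /andP [c0 c1] d01; pose tau := c / (1 - eps).
have tauE : tau * (1 - eps) = c by rewrite /tau divfK // subr_eq0 eq_sym lt_eqF.
have tau01 : 0 <= tau <= 1.
  by rewrite divr_ge0 ?ler_pdivrMr ?subr_gt0 ?mul1r ?subr_ge0 // ltW.
pose wb (b : bool) := if b then tau else 1 - tau.
pose w (bv : bool * {ffun Y -> bool}) := wb bv.1 * bernoulli_weight d bv.2.
have w1 : \sum_bv w bv = 1.
  rewrite -(pair_bigA _ (fun b v => wb b * bernoulli_weight d v)) big_bool /=.
  by rewrite -!mulr_sumr sum_bernoulli_weight /wb; ring.
exists w; split => //.
  move=> [b v]; apply: mulr_ge0; last exact: bernoulli_weight_ge0.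
  by rewrite /wb; case: b; case/andP: tau01 => // ? ?; rewrite subr_ge0.
move=> y a; rewrite sum_binary //; congr binary.
pose base (b : bool) := if b then 1 - eps else 0.
have sum_v b : \sum_v w (b, v) * (base b + eps * (v y)%:R) =
               wb b * (base b + eps * d y).
  rewrite (eq_bigr (fun v => wb b * base b * bernoulli_weight d v +
                             wb b * eps * (bernoulli_weight d v * (v y)%:R))).
    by rewrite big_split /= -!mulr_sumr sum_bernoulli_weight bernoulli_weight_marginal; ring.
  by move=> v _; rewrite /w /=; ring.
rewrite -(pair_bigA _ (fun b v => w (b, v) * (base b + eps * (v y)%:R))) big_bool /=.
by rewrite !sum_v /wb /base -tauE; ring.
Qed.

Lemma band_conv_hull p : 0 <= eps -> eps < 1 -> eps_band p -> conv_hull corner p.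
Proof.
move=> eps0 eps1 p_band; have [c c01 window] := band_window eps0 (ltW eps1) p_band.
pose d y := if eps == 0 then 0 else (p y ord0 - c) / eps.
have d01 y : 0 <= d y <= 1.
  rewrite /d; case: eqP => [_|/eqP eps_neq0]; first by rewrite lexx ler01.
  have eps_gt0 : 0 < eps by rewrite lt_neqAle eq_sym eps_neq0.
  have /andP [c_le c_ge] := window y.
  by rewrite divr_ge0 ?ler_pdivrMr ?mul1r //=; lra.
have pE : p = fun y => binary (c + eps * d y).
  apply/funext => y; rewrite (binary_band y p_band); congr binary.
  rewrite /d; case: eqP => [eps_eq0|/eqP eps_neq0]; last by rewrite mulrC divfK //; ring.
  by have := window y; rewrite eps_eq0; lra.
by rewrite pE; exact: conv_hull_corners.
Qed.

End BinaryBehaviours.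

Unset Implicit Arguments.

Theorem mainTheorem2 (R : realType) (X Y : finType) (xs : X) (eps : R) :
  (2 <= #|X|)%N -> (2 <= #|Y|)%N -> 0 <= eps -> eps < 1 ->
  is_convex_set (@P2 R X Y 'I_2 xs eps) /\
  is_polytope (@P2 R X Y 'I_2 xs eps) /\
  (forall pext : Y -> 'I_2 -> R, is_vertex (@P2 R X Y 'I_2 xs eps) pext ->
     forall (a : 'I_2) (y : Y),
       pext y a = 0 \/ pext y a = eps \/ pext y a = 1 - eps \/ pext y a = 1).
Proof.
move=> _ _ eps0 eps1.
have P2E (p : Y -> 'I_2 -> R) : P2 xs eps p <-> conv_hull (corner eps) p.
  split=> [/(P2_band eps0) /(band_conv_hull eps0 eps1) //|].
  by move=> /conv_hull_band p_band; apply/band_P2/p_band => bv; exact: corner_band.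
split; [|split].
- move=> u v t /(P2_band eps0) u_band /(P2_band eps0) v_band t01.
  exact/band_P2/band_convex.
- exists #|{: bool * {ffun Y -> bool}}|, (fun i => corner eps (enum_val i)).
  by move=> p; rewrite P2E; exact: conv_hull_enum.
- by move=> p /(vertex_conv_hull P2E) [bv ->] a y; exact: corner_entries.
Qed.
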